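(* Let $(\Delta,U,\mu_\Delta)$ be an expanding Young tower with $\mu_\Delta(\Delta_n)=O(\rho^n)$ for some $\rho<1$, and let $\tau<1$. There exist $C>0$ and $\theta<1$ such that for all $n\in\mathbb N$, $$\int_{U^{-n}\Delta_0}\tau^{\Psi_n}\,d\mu_\Delta\le C\theta^n.$$
   Context: Expanding Young tower: probability space $(\Delta,\mu_\Delta)$, measure-preserving $U$, partition $\{\Delta_{k,p}\}_{0\le k<r_p}$ with $U:\Delta_{k,p}\to\Delta_{k+1,p}$ and $U:\Delta_{r_p-1,p}\to\Delta_0=\bigcup_m\Delta_{0,m}$ measurable isomorphisms, and bounded distortion $|1-J(x)/J(y)|\le C\beta^{s(Ux,Uy)}$ for the inverse Jacobian $J$ of $U$ and $x,y$ in a common partition element ($s$ the separation time counted in returns to the basis). $\Delta_n=\bigcup_p\Delta_{n,p}$. $\Psi_n(x)=\#\{1\le k\le n: U^kx\in\Delta_0\}$ is the number of returns to the basis between times $1$ and $n$. *)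

From HB Require Import structures.
From mathcomp Require Import all_boot all_order all_algebra.
From mathcomp Require Import all_classical all_reals all_analysis.
Set Implicit Arguments. Unset Strict Implicit. Unset Printing Implicit Defensive.
Import Order.TTheory GRing.Theory Num.Theory.
Local Open Scope classical_set_scope.
Local Open Scope ring_scope.

Section YoungTower.
Context {d : measure_display} {T : measurableType d} {R : realType}.
Variables (P : probability T R) (U : T -> T) (r : nat -> nat)
  (part : nat -> nat -> set T) (J : T -> R).

Definition level (n : nat) : set T :=
  \bigcup_(p in [set p | (n < r p)%N]) part n p.

Definition base : set T := level 0.

Definition Psi (n : nat) (x : T) : nat :=
  (\sum_(1 <= k < n.+1) ((iter k U x) \in base))%N.

Definition same_elt (x y : T) : Prop :=
  exists k p, (k < r p)%N /\ part k p x /\ part k p y.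

(* "s(x,y) >= m": the separation time, counted in returns to the basis,
   is at least m.  If N is the first time at which U^N x and U^N y lie in
   different partition elements, s(x,y) = Psi N x; if there is no such N,
   s(x,y) = +oo. *)
Definition sep_ge (x y : T) (m : nat) : Prop :=
  forall N : nat,
    (forall j, (j < N)%N -> same_elt (iter j U x) (iter j U y)) ->
    ~ same_elt (iter N U x) (iter N U y) ->
    (m <= Psi N x)%N.

Definition meas_iso (A B : set T) : Prop :=
  {in A &, injective U} /\ U @` A = B /\
  (forall S, measurable S -> S `<=` A -> measurable (U @` S)).

Record is_young_tower : Prop := {
  yt_meas : measurable_fun setT U;
  yt_pres : forall A, measurable A -> P (U @^-1` A) = P A;
  yt_r_pos : forall p, (0 < r p)%N;
  yt_part_meas : forall k p, measurable (part k p);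
  yt_cover : forall x, exists k p, (k < r p)%N /\ part k p x;
  yt_disj : forall k p k' p' x, (k < r p)%N -> (k' < r p')%N ->
      part k p x -> part k' p' x -> k = k' /\ p = p';
  yt_up : forall k p, (k.+1 < r p)%N -> meas_iso (part k p) (part k.+1 p);
  yt_top : forall p, meas_iso (part (r p).-1 p) base;
  (* J is the inverse Jacobian of U: mu(U S) = \int_S 1/J dmu
     for measurable S inside a partition element *)
  yt_J_pos : forall x, 0 < J x;
  yt_J_meas : measurable_fun setT J;
  yt_jac : forall k p S, (k < r p)%N -> measurable S -> S `<=` part k p ->
      P (U @` S) = (\int[P]_(x in S) ((J x)^-1)%:E)%E;
  yt_dist : exists (C beta : R), 0 <= C /\ 0 < beta < 1 /\
      forall x y, same_elt x y -> forall m, sep_ge (U x) (U y) m ->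
        `|1 - J x / J y| <= C * beta ^+ m
}.

End YoungTower.

(* Split the points of U^-n Delta_0 according to the number k of returns Psi_n.  A point
   with k+1 returns makes its first return at some time t+1 <= n from the top floor of a tower
   of height > t; these top floors have total measure mu(Delta_t), and bounded distortion of
   the return map makes the first return asymptotically independent of the remaining k
   returns.  This gives the renewal inequality
     mu(Psi_n = k+1, U^n x in Delta_0) <= c sum_t mu(Delta_t) mu(Psi_(n-t-1) = k, ...),
   which with mu(Delta_t) = O(rho^t) yields the bound w^k theta^n.  Interpolating it with the
   trivial bound 1 lets the weight tau^k absorb w^k, so the integral decays geometrically. *)

From HB Require Import structures.
From mathcomp Require Import all_boot all_order all_algebra.
From mathcomp Require Import all_classical all_reals all_analysis.
From mathcomp Require Import measurable_realfun.
From mathcomp Require Import zify ring lra.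
Import Order.TTheory GRing.Theory Num.Theory.
Set Implicit Arguments. Unset Strict Implicit. Unset Printing Implicit Defensive.
Local Open Scope classical_set_scope.
Local Open Scope ring_scope.

Section geometric_bounds.
Variable R : realType.
Implicit Types (a c g rho tau theta w : R) (f : nat -> nat -> R).

Lemma sum_geometric_le g n : 0 <= g < 1 -> \sum_(k < n) g ^+ k <= (1 - g)^-1.
Proof.
case/andP=> g0 g1; have g1' : 0 < 1 - g by rewrite subr_gt0.
rewrite -[leRHS]mul1r ler_pdivlMr // mulrC.
under eq_bigr => k _ do rewrite -[g ^+ k]mul1r -(expr1n R (n.-1 - k)).
by rewrite -subrXX expr1n lerBlDr lerDl exprn_ge0.
Qed.

Lemma sum_geometric_convolution_le rho theta n : 0 <= rho < theta ->
  \sum_(t < n) rho ^+ t * theta ^+ (n - t.+1) <= theta ^+ n / (theta - rho).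
Proof.
case/andP=> rho0 rho_theta; have gap : 0 < theta - rho by rewrite subr_gt0.
rewrite ler_pdivlMr // mulrC.
have -> : \sum_(t < n) rho ^+ t * theta ^+ (n - t.+1) =
    \sum_(t < n) theta ^+ (n.-1 - t) * rho ^+ t.
  by apply: eq_bigr => t _; rewrite mulrC; congr (_ ^+ _ * _); lia.
by rewrite -subrXX lerBlDr lerDl exprn_ge0.
Qed.

Lemma expr_root_exists a N : 0 <= a -> (0 < N)%N ->
  exists2 b, 0 <= b & b ^+ N = a.
Proof.
move=> a0 N0; exists (a `^ N%:R^-1); first exact: powR_ge0.
rewrite -powR_mulrn ?powR_ge0 // -powRrM mulVf ?powRr1 //.
by rewrite pnatr_eq0 -lt0n.
Qed.

Lemma renewal_geometric_bound f c rho :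
  0 <= c -> 0 <= rho < 1 -> (forall n k, 0 <= f n k) ->
  f 0%N 0%N <= 1 -> (forall n, f n.+1 0%N = 0) ->
  (forall n k, f n k.+1 <= \sum_(t < n) c * rho ^+ t * f (n - t.+1)%N k) ->
  exists w theta, 0 < w /\ 0 < theta < 1 /\
    forall n k, f n k <= w ^+ k * theta ^+ n.
Proof.
move=> c0 /andP[rho0 rho1] f0 f00 fS0 f_rec.
pose theta := (1 + rho) / 2.
have theta0 : 0 < theta by rewrite /theta; lra.
have rho_theta : rho < theta by rewrite /theta; lra.
pose w := c / (theta - rho) + 1.
have cw : c / (theta - rho) <= w by rewrite lerDl.
have w0 : 0 < w by rewrite /w ltr_pwDr // divr_ge0 // subr_ge0 ltW.
exists w, theta; split=> //; split; first by rewrite theta0 /theta; lra.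
move=> n k; elim: k n => [|k IH] n.
  by case: n => [|n]; rewrite ?fS0 expr0 mul1r // exprn_ge0 // ltW.
apply: le_trans (f_rec n k) _.
have geo_le := @sum_geometric_convolution_le rho theta n.
apply: (@le_trans _ _ (c * w ^+ k * \sum_(t < n) rho ^+ t * theta ^+ (n - t.+1))).
  rewrite mulr_sumr ler_sum // => t _.
  rewrite -mulrA -[X in _ <= X]mulrA; apply: ler_wpM2l => //.
  by rewrite mulrCA; apply: ler_wpM2l; rewrite ?exprn_ge0.
apply: (@le_trans _ _ (c * w ^+ k * (theta ^+ n / (theta - rho)))).
  apply: ler_wpM2l; first by rewrite mulr_ge0 // exprn_ge0 // ltW.
  by apply: geo_le; rewrite rho0 rho_theta.
have -> : c * w ^+ k * (theta ^+ n / (theta - rho)) =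
    w ^+ k * theta ^+ n * (c / (theta - rho)) by field; rewrite subr_eq0 gt_eqF.
by rewrite exprSr [X in _ <= X]mulrAC; apply: ler_wpM2l; rewrite // mulr_ge0 // exprn_ge0 // ltW.
Qed.

Lemma expr_interpolate_le (t x y : R) m k : 0 <= t <= 1 -> 0 <= x <= 1 -> x <= y ->
  (t ^+ k * x) ^+ m.+1 <= (t ^+ m) ^+ k * y.
Proof.
case/andP=> t0 t1 /andP[x0 x1] xy; rewrite exprMn.
apply: ler_pM; rewrite ?exprn_ge0 //.
  by rewrite -!exprM mulnSr exprD mulnC -[leRHS]mulr1 ler_wpM2l ?exprn_ge0 ?exprn_ile1.
by rewrite (le_trans _ xy) // exprS -[leRHS]mulr1 ler_wpM2l ?exprn_ile1.
Qed.

Lemma weighted_geometric_sum_bound f w theta tau :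
  0 < w -> 0 < theta < 1 -> 0 <= tau < 1 -> (forall n k, 0 <= f n k <= 1) ->
  (forall n k, f n k <= w ^+ k * theta ^+ n) ->
  exists C theta', 0 < C /\ 0 < theta' < 1 /\
    forall n, \sum_(k < n.+1) tau ^+ k * f n k <= C * theta' ^+ n.
Proof.
move=> w0 /andP[theta0 theta1] /andP[tau0 tau1] f01 f_le.
have f0 n k : 0 <= f n k by case/andP: (f01 n k).
have [m tau_small] : exists m, tau ^+ m < w^-1.
  have tau_norm : `|tau| < 1 by rewrite ger0_norm.
  have w'0 : 0 < w^-1 by rewrite invr_gt0.
  have [N _ /(_ N (leqnn N))] := cvgr0_norm_lt _ (cvg_expr tau_norm) _ w'0.
  by exists N; rewrite (le_lt_trans (ler_norm _)).
pose q := tau ^+ m * w.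
have q0 : 0 <= q by rewrite mulr_ge0 // ?exprn_ge0 // ltW.
have q1 : q < 1 by rewrite /q -ltr_pdivlMr // div1r.
have [g g0 gE] := expr_root_exists q0 (ltn0Sn m).
have [theta' theta'0 theta'E] := expr_root_exists (ltW theta0) (ltn0Sn m).
have g1 : g < 1 by rewrite -(expr_lt1 (ltn0Sn m)) // gE.
exists (1 - g)^-1, theta'; split; first by rewrite invr_gt0 subr_gt0.
split.
  rewrite -(expr_lt1 (ltn0Sn m)) // theta'E theta1 andbT lt_def theta'0 andbT.
  by apply: contraTneq theta0 => theta'_0; rewrite -theta'E theta'_0 expr0n ltxx.
move=> n; apply: le_trans (_ : \sum_(k < n.+1) g ^+ k * theta' ^+ n <= _); last first.
  rewrite -mulr_suml; apply: ler_wpM2r; first exact: exprn_ge0.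
  by apply: sum_geometric_le; rewrite g0.
(* raising to the power m+1 trades the factor tau^(mk) for the w^k of the bound on f *)
apply: ler_sum => k _.
rewrite -(@ler_pXn2r _ m.+1) // ?nnegrE ?mulr_ge0 ?exprn_ge0 ?f0 //.
apply: le_trans (expr_interpolate_le m k _ (f01 n k) (f_le n k)) _.
  by rewrite tau0 ltW.
by rewrite exprMn -!exprM !(mulnC _ m.+1) !exprM gE theta'E mulrA -exprMn.
Qed.

End geometric_bounds.

Section young_tower.
Context (d : measure_display) (T : measurableType d) (R : realType)
  (P : probability T R) (U : T -> T) (r : nat -> nat)
  (part : nat -> nat -> set T) (J : T -> R).
Hypothesis tower : is_young_tower P U r part J.
Local Notation B := (base r part).
Local Notation Psi := (Psi U r part).

Lemma measurable_part k p : measurable (part k p).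
Proof. exact: (yt_part_meas tower). Qed.

Lemma measurable_level n : measurable (level r part n).
Proof. by apply: bigcup_measurable => p _; exact: measurable_part. Qed.

Lemma measurable_base : measurable B.
Proof. exact: measurable_level. Qed.

Lemma measurable_iter n : measurable_fun setT (iter n U).
Proof.
elim: n => [|n IH] /=; first exact: measurable_id.
exact: measurableT_comp (yt_meas tower) IH.
Qed.

Lemma measurable_preimage_iter n A :
  measurable A -> measurable (iter n U @^-1` A).
Proof. by move=> mA; rewrite -[X in measurable X]setTI; exact: measurable_iter. Qed.

Lemma measure_preimage_iter n A : measurable A -> P (iter n U @^-1` A) = P A.
Proof.
elim: n A => [//|n IH] A mA.
rewrite (_ : _ @^-1` A = iter n U @^-1` (U @^-1` A)) //.
by rewrite IH ?(yt_pres tower) //; exact: (measurable_preimage_iter 1).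
Qed.

Lemma probability_fineE A : measurable A -> P A = (fine (P A))%:E.
Proof. by move=> mA; rewrite fineK // fin_num_measure. Qed.

Lemma fine_measure_ge0 A : 0 <= fine (P A).
Proof. exact/fine_ge0/measure_ge0. Qed.

Lemma fine_measure_le1 A : measurable A -> fine (P A) <= 1.
Proof. by move=> mA; rewrite -lee_fin -probability_fineE // probability_le1. Qed.

Lemma part_succ k p x : (k.+1 < r p)%N -> part k p x -> part k.+1 p (U x).
Proof. by move=> kp px; have [_ [<- _]] := yt_up tower kp; exists x. Qed.

Lemma part_top_base p x : part (r p).-1 p x -> B (U x).
Proof. by move=> px; have [_ [<- _]] := yt_top tower p; exists x. Qed.

Lemma part_gt0_notin_base k p x : (0 < k < r p)%N -> part k p x -> ~ B x.
Proof.
case/andP=> k0 kp px [q /= q0 qx].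
by have [k0' _] := yt_disj tower kp q0 px qx; rewrite k0' in k0.
Qed.

Lemma part_iter l p x j : (l + j < r p)%N -> part l p x ->
  part (l + j) p (iter j U x).
Proof.
elim: j => [|j IH] ljp px; first by rewrite addn0.
by rewrite addnS iterS; apply: part_succ; [lia | apply: IH => //; lia].
Qed.

Lemma part_return l p x : (l < r p)%N -> part l p x -> B (iter (r p - l) U x).
Proof.
move=> lp px; have -> : (r p - l = (r p - l).-1.+1)%N by lia.
rewrite iterS; apply: (part_top_base (p := p)).
have -> : ((r p).-1 = l + (r p - l).-1)%N by lia.
by apply: part_iter => //; lia.
Qed.

Lemma preimage_part_succ k p : (k.+1 < r p)%N -> U @^-1` part k.+1 p = part k p.
Proof.
move=> kp; apply/seteqP; split => [x /= Ux|x /=]; last exact: part_succ.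
have [j [q [jq qx]]] := yt_cover tower x.
case: (ltnP j.+1 (r q)) => jq'.
  by have [[<-] <-] := yt_disj tower jq' kp (part_succ jq' qx) Ux.
have qx' : part (r q).-1 q x by have <- : j = (r q).-1 by lia.
have [q' /= q'0 q'x] := part_top_base qx'.
by have [] := yt_disj tower q'0 kp q'x Ux.
Qed.

Lemma measure_part k p : (k < r p)%N -> P (part k p) = P (part 0 p).
Proof.
elim: k => [//|k IH] kp.
by rewrite -(yt_pres tower (measurable_part _ _)) preimage_part_succ // IH // ltnW.
Qed.

Lemma Psi0 x : Psi 0 x = 0%N.
Proof. by rewrite /Psi big_geq. Qed.

Lemma PsiS n x : Psi n.+1 x = ((U x \in B) + Psi n (U x))%N.
Proof.
rewrite /Psi big_nat_recl //=; congr (_ + _)%N.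
by apply: eq_bigr => k _; rewrite -iterS iterSr.
Qed.

Lemma Psi_le n x : (Psi n x <= n)%N.
Proof.
elim: n x => [|n IH] x; first by rewrite Psi0.
by rewrite PsiS; have := IH (U x); case: (U x \in B) => /=; lia.
Qed.

Lemma Psi_gt0 n x : B (iter n.+1 U x) -> (0 < Psi n.+1 x)%N.
Proof. by move=> h; rewrite /Psi big_nat_recr //= (mem_set h) addn1. Qed.

Lemma Psi_first_return t n x : (0 < t <= n)%N ->
  (forall j, (0 < j < t)%N -> ~ B (iter j U x)) -> B (iter t U x) ->
  Psi n x = (Psi (n - t) (iter t U x)).+1.
Proof.
elim: t n x => [//|t IH] [//|n] x /= tn no_ret ret; rewrite PsiS.
case: t IH tn no_ret ret => [|t] IH tn no_ret ret.
  by rewrite (mem_set ret) subn1.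
have /negbTE-> : U x \notin B by apply/negP; rewrite in_setE; apply: (no_ret 1%N).
rewrite add0n (IH n (U x)) ?subSS -?iterSr //.
by move=> j j_t; rewrite -iterSr; apply: no_ret; lia.
Qed.

Lemma measurable_Psi_eq n k : measurable [set x | Psi n x = k].
Proof.
have mPsi : measurable_fun setT (fun x => (Psi n x)%:R : R).
  rewrite /Psi; under eq_fun do rewrite natr_sum.
  apply: measurable_sum => j; rewrite (_ : (fun x => _) = \1_(iter j U @^-1` B)) //.
  exact/measurable_indic/measurable_preimage_iter/measurable_base.
rewrite (_ : [set x | _] = (fun x => (Psi n x)%:R : R) @^-1` [set k%:R]).
  by rewrite -[X in measurable X]setTI; apply: mPsi => //; exact: measurable_set1.
by apply/seteqP; split=> x /=; [move->|move/eqP; rewrite eqr_nat => /eqP].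
Qed.

Definition return_set n k := iter n U @^-1` B `&` [set x | Psi n x = k].

Definition top_floor t := \bigcup_(p in [set p | (t < r p)%N]) part (r p).-1 p.

Definition first_return_set n k t :=
  iter t U @^-1` (top_floor t `&` U @^-1` (B `&` return_set (n - t.+1) k)).

Lemma measurable_return_set n k : measurable (return_set n k).
Proof.
apply: measurableI; last exact: measurable_Psi_eq.
exact/measurable_preimage_iter/measurable_base.
Qed.

Lemma measurable_top_floor t : measurable (top_floor t).
Proof. by apply: bigcup_measurable => p _; exact: measurable_part. Qed.

Lemma return_set_S0 n : return_set n.+1 0 = set0.
Proof.
by apply/seteqP; split=> x // [/Psi_gt0 + /= Psi_x]; rewrite Psi_x.
Qed.

Lemma return_set_cover n k :
  return_set n k.+1 `<=` \big[setU/set0]_(t < n) first_return_set n k t.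
Proof.
move=> x [/= ret_n Psi_n].
have n0 : (0 < n)%N by case: n ret_n Psi_n => // _; rewrite Psi0.
have [l [p [lp px]]] := yt_cover tower x.
have no_ret j : (0 < j)%N -> (l + j < r p)%N -> ~ B (iter j U x).
  move=> j0 ljp; apply: (@part_gt0_notin_base (l + j) p); first lia.
  exact: part_iter.
have ret_time : (r p - l <= n)%N.
  by rewrite leqNgt; apply/negP => nt; apply: (no_ret n) => //; lia.
rewrite (@Psi_first_return (r p - l)) in Psi_n; first last.
- exact: part_return.
- by move=> j j_t; apply: no_ret; lia.
- by rewrite ret_time andbT subn_gt0.
case: Psi_n => Psi_n; rewrite -bigcup_mkord.
have ret_pred : (r p - l = (r p - l).-1.+1)%N by lia.
exists (r p - l).-1; first by rewrite /=; lia.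
split.
  exists p; first by rewrite /=; lia.
  have -> : ((r p).-1 = l + (r p - l).-1)%N by lia.
  by apply: part_iter => //; lia.
rewrite /preimage /= -iterS -ret_pred; split; first exact: part_return.
by split => //; rewrite /preimage /= -iterD subnK.
Qed.

Lemma measurable_image k p S : (k < r p)%N -> measurable S -> S `<=` part k p ->
  measurable (U @` S).
Proof.
move=> kp mS Sk; case: (ltnP k.+1 (r p)) => [kp'|pk].
  exact: (yt_up tower kp').2.2.
have kE : k = (r p).-1 by lia.
by rewrite kE in Sk; apply: (yt_top tower p).2.2.
Qed.

(* Only the trivial separation bound s(Ux, Uy) >= 0 of bounded distortion is needed. *)
Lemma jacobian_ratio_bound : exists2 C, 0 < C &
  forall k p u v, (k < r p)%N -> part k p u -> part k p v -> J u <= C * J v.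
Proof.
have [C [beta [C0 [_ dist]]]] := yt_dist tower.
exists (1 + C); first by rewrite ltr_pwDl.
move=> k p u v kp pu pv.
have /(_ 0%N (fun _ _ _ => leq0n _)) := dist u v (ex_intro _ k (ex_intro _ p (conj kp (conj pu pv)))).
rewrite expr0 mulr1 ler_norml => /andP[ratio _].
by rewrite -ler_pdivrMr ?(yt_J_pos tower); lra.
Qed.

Lemma measurable_inv_jacobian D : measurable_fun D (fun x => ((J x)^-1)%:E).
Proof.
apply/measurable_EFinP/measurable_funTS.
rewrite (_ : (fun x => _) = (fun x => J x `^ (-1))); last first.
  by apply/funext => x; rewrite powR_inv1 // ltW // (yt_J_pos tower).
exact: measurableT_comp (measurable_powR _) (yt_J_meas tower).
Qed.

Lemma measure_image_ge k p S a : (k < r p)%N -> measurable S -> S `<=` part k p ->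
  0 < a -> (forall x, S x -> J x <= a) -> ((a^-1)%:E * P S <= P (U @` S))%E.
Proof.
move=> kp mS Sk a0 Ja; rewrite (yt_jac tower kp mS Sk) -integral_cst //.
apply: ge0_le_integral => //.
- by move=> x _; rewrite lee_fin invr_ge0 ltW.
- exact: measurable_inv_jacobian.
- by move=> x Sx; rewrite lee_fin lef_pV2 ?posrE ?(yt_J_pos tower) ?Ja.
Qed.

Lemma measure_image_le k p S a : (k < r p)%N -> measurable S -> S `<=` part k p ->
  0 < a -> (forall x, S x -> a <= J x) -> (P (U @` S) <= (a^-1)%:E * P S)%E.
Proof.
move=> kp mS Sk a0 Ja; rewrite (yt_jac tower kp mS Sk) -integral_cst //.
apply: ge0_le_integral => //.
- by move=> x _; rewrite lee_fin invr_ge0 ltW ?(yt_J_pos tower).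
- exact: measurable_inv_jacobian.
- by move=> x Sx; rewrite lee_fin lef_pV2 ?posrE ?(yt_J_pos tower) ?Ja.
Qed.

Lemma distortion_preimage_le : exists2 D, 0 <= D & forall k p V,
  (k < r p)%N -> measurable V -> V `<=` U @` part k p ->
  (P (part k p `&` U @^-1` V) * P (U @` part k p) <= D%:E * P (part k p) * P V)%E.
Proof.
have [C C0 JC] := jacobian_ratio_bound.
exists (C ^+ 2); first by rewrite exprn_ge0 // ltW.
move=> k p V kp mV VE.
set E := part k p; set W := E `&` U @^-1` V.
have mE : measurable E := measurable_part k p.
have mW : measurable W by apply: measurableI => //; exact: (measurable_preimage_iter 1).
have UW : U @` W = V.
  apply/seteqP; split=> [_ [x [_ Vx] <-] //|v Vv].
  by have [x Ex Uxv] := VE v Vv; exists x => //; split => //; rewrite /preimage /= Uxv.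
have [[y Ey]|/forallNP E0] := pselect (exists y, E y); last first.
  have -> : W = set0 by apply/seteqP; split=> x // [/E0].
  by rewrite measure0 mul0e !mule_ge0 // lee_fin exprn_ge0 // ltW.
have a0 : 0 < J y := yt_J_pos tower y.
have /measure_image_ge : forall x, W x -> J x <= C * J y by move=> x [Ex _]; exact: JC Ex Ey.
have /measure_image_le : forall x, E x -> J y / C <= J x.
  by move=> x Ex; rewrite ler_pdivrMr // mulrC; exact: JC Ey Ex.
move=> /(_ k p kp mE (fun x Ex => Ex)); rewrite divr_gt0 // => /(_ isT) up.
move=> /(_ k p kp mW (fun x Wx => Wx.1)); rewrite mulr_gt0 // => /(_ isT) low.
rewrite UW in low.
have mUE : measurable (U @` E) by exact: measurable_image kp mE _.
move: low up.
rewrite (probability_fineE mW) (probability_fineE mV) (probability_fineE mE).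
rewrite (probability_fineE mUE) -!EFinM !lee_fin invf_div mulrC ler_pdivrMr ?mulr_gt0 //.
move=> low up; apply: le_trans (ler_pM (fine_measure_ge0 _) (fine_measure_ge0 _) low up) _.
by rewrite le_eqVlt; apply/orP; left; apply/eqP; field; rewrite gt_eqF.
Qed.

Lemma trivIset_part k : trivIset [set p | (k < r p)%N] (part k).
Proof. by move=> p q kp kq [x [px qx]]; have [_ ->] := yt_disj tower kp kq px qx. Qed.

Lemma top_floor_preimage_le : exists2 D, 0 <= D & forall t V,
  measurable V -> V `<=` B ->
  (P (top_floor t `&` U @^-1` V) * P B <= D%:E * P (level r part t) * P V)%E.
Proof.
have [D D0 distortion] := distortion_preimage_le.
exists D => // t V mV VB.
have top p : ((r p).-1 < r p)%N by have := yt_r_pos tower p; lia.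
have top_triv : trivIset [set p | (t < r p)%N] (fun p => part (r p).-1 p `&` U @^-1` V).
  move=> p q _ _ [x [[px _] [qx _]]].
  by have [_ ->] := yt_disj tower (top p) (top q) px qx.
have mV' : measurable (U @^-1` V) := measurable_preimage_iter 1 mV.
rewrite (probability_fineE measurable_base) (probability_fineE mV).
set pb := fine (P B); set pV := fine (P V).
rewrite /top_floor setI_bigcupl measure_bigcup //; last first.
  by move=> p _; apply: measurableI => //; exact: measurable_part.
rewrite /level measure_bigcup; last 2 first.
- by move=> p _; exact: measurable_part.
- exact: trivIset_part.
rewrite muleC -nneseriesZl // -muleA [X in (_ * X)%E]muleC muleA -EFinM -nneseriesZl //.
apply: lee_nneseries => [p _ _|p].
  by rewrite mule_ge0 ?lee_fin ?fine_measure_ge0.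
rewrite inE /= => tp.
have := distortion _ p V (top p) mV; rewrite (yt_top tower p).2.1 => /(_ VB).
rewrite (measure_part (top p)) -(measure_part tp).
have mW : measurable (part (r p).-1 p `&` U @^-1` V) by exact: measurableI (measurable_part _ _) mV'.
rewrite (probability_fineE mW) (probability_fineE measurable_base) (probability_fineE mV).
rewrite (probability_fineE (measurable_part t p)) -!EFinM !lee_fin -/pb -/pV => h.
by rewrite mulrC (le_trans h) // mulrAC.
Qed.

Lemma return_set_measure_rec : exists2 D, 0 <= D & forall n k,
  (P (return_set n k.+1) * P B <=
     \sum_(t < n) D%:E * P (level r part t) * P (return_set (n - t.+1) k))%E.
Proof.
have [D D0 top_le] := top_floor_preimage_le.
exists D => // n k.
have mV t : measurable (B `&` return_set (n - t.+1) k).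
  exact: measurableI measurable_base (measurable_return_set _ _).
have mT t : measurable (top_floor t `&` U @^-1` (B `&` return_set (n - t.+1) k)).
  exact: measurableI (measurable_top_floor t) (measurable_preimage_iter 1 (mV t)).
have mX t : measurable (first_return_set n k t) := measurable_preimage_iter t (mT t).
apply: le_trans (lee_wpmul2r (measure_ge0 P B) _) _.
  exact: content_subadditive (fun t _ => mX t) (measurable_return_set n k.+1) (@return_set_cover n k).
rewrite ge0_sume_distrl; last by move=> t _; exact: measure_ge0.
apply: lee_sum => t _.
apply: (@le_trans _ _ (P (top_floor t `&` U @^-1` (B `&` return_set (n - t.+1) k)) * P B)%E).
  by rewrite -(measure_preimage_iter t (mT t)).
apply: le_trans (top_le t _ (mV t) (fun x Vx => Vx.1)) _.
rewrite lee_wpmul2l ?mule_ge0 ?lee_fin //.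
by apply: le_measure; rewrite ?inE; [exact: mV|exact: measurable_return_set|move=> x []].
Qed.

Lemma return_set_fine_rec : exists2 c, 0 <= c & forall n k,
  fine (P (return_set n k.+1)) <=
    \sum_(t < n) c * fine (P (level r part t)) * fine (P (return_set (n - t.+1) k)).
Proof.
have [D D0 rec] := return_set_measure_rec.
have mB := measurable_base.
have [PB0|PB0] := eqVneq (fine (P B)) 0.
  exists 0 => // n k; rewrite big1 => [|t _]; last by rewrite !mul0r.
  rewrite -lee_fin -probability_fineE; last exact: measurable_return_set.
  apply: le_trans (_ : P (iter n U @^-1` B) <= _)%E.
    apply: le_measure; rewrite ?inE; last by move=> x [].
      exact: measurable_return_set.
    exact: measurable_preimage_iter.
  by rewrite measure_preimage_iter // (probability_fineE mB) PB0.
have PB_gt0 : 0 < fine (P B) by rewrite lt_def PB0; exact: fine_measure_ge0.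
exists (D / fine (P B)); first by rewrite divr_ge0 // ltW.
move=> n k; have := rec n k.
have -> : (\sum_(t < n) D%:E * P (level r part t) * P (return_set (n - t.+1) k) =
    (\sum_(t < n) D * fine (P (level r part t)) * fine (P (return_set (n - t.+1) k)))%:E)%E.
  rewrite -sumEFin; apply: eq_bigr => t _.
  rewrite !EFinM !fineK // fin_num_measure //; [exact: measurable_return_set|exact: measurable_level].
rewrite (probability_fineE (measurable_return_set n k.+1)) (probability_fineE mB) -EFinM.
rewrite lee_fin -ler_pdivlMr // mulr_suml => /le_trans; apply.
by apply: ler_sum => t _ /=; rewrite le_eqVlt; apply/orP; left; apply/eqP; ring.
Qed.

Lemma integral_pow_Psi tau n : 0 <= tau ->
  (\int[P]_(x in iter n U @^-1` B) (tau ^+ Psi n x)%:E =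
     (\sum_(k < n.+1) tau ^+ k * fine (P (return_set n k)))%:E)%E.
Proof.
move=> tau0.
have mD : measurable (iter n U @^-1` B) := measurable_preimage_iter n measurable_base.
pose S (k : 'I_n.+1) := [set x | Psi n x = k].
have mS k : measurable (S k) := measurable_Psi_eq n k.
rewrite (eq_integral (fun x => \sum_(k < n.+1) (tau ^+ k)%:E * (\1_(S k) x)%:E))%E.
  rewrite ge0_integral_sum //; last first.
  - by move=> k x _; rewrite mule_ge0 ?lee_fin ?exprn_ge0.
  - by move=> k; apply/measurable_EFinP/measurable_funM => //; exact: measurable_indic.
  rewrite -sumEFin; apply: eq_bigr => k _.
  rewrite ge0_integralZl ?lee_fin ?exprn_ge0 //; last exact/measurable_EFinP/measurable_indic.
  rewrite integral_indic // setIC EFinM -probability_fineE //.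
  exact: measurable_return_set.
move=> x _ /=; rewrite sumEFin; congr (_%:E).
have Psi_n : (Psi n x < n.+1)%N by rewrite ltnS Psi_le.
rewrite (bigD1 (Ordinal Psi_n)) //= big1 => [|k /negbTE k_Psi].
  by rewrite indicE mem_set // mulr1 addr0.
rewrite indicE memNset ?mulr0 // => Skx; move: k_Psi.
by rewrite -(inj_eq val_inj) /= -Skx eqxx.
Qed.

End young_tower.

Theorem lemmaA2 (d : measure_display) (T : measurableType d) (R : realType)
  (P : probability T R) (U : T -> T) (r : nat -> nat)
  (part : nat -> nat -> set T) (J : T -> R) (tau : R) :
  is_young_tower P U r part J ->
  (exists rho K : R, 0 <= rho < 1 /\
     forall n, (P (level r part n) <= (K * rho ^+ n)%:E)%E) ->
  0 <= tau < 1 ->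
  exists C theta : R, 0 < C /\ 0 < theta < 1 /\
    forall n : nat,
      (\int[P]_(x in (iter n U) @^-1` base r part)
          (tau ^+ Psi U r part n x)%:E <= (C * theta ^+ n)%:E)%E.
Proof.
move=> tower [rho [K [rho01 level_le]]] tau01.
pose f n k := fine (P (return_set U r part n k)).
have f01 n k : 0 <= f n k <= 1.
  by rewrite fine_measure_ge0 fine_measure_le1 //; exact: (measurable_return_set tower).
have level_fine_le t : fine (P (level r part t)) <= K * rho ^+ t.
  by rewrite -lee_fin -probability_fineE ?level_le //; exact: (measurable_level tower).
have K0 : 0 <= K.
  by have := le_trans (fine_measure_ge0 _ _) (level_fine_le 0%N); rewrite mulr1.
have [c c0 f_rec] := return_set_fine_rec tower.
have [w [theta [w0 [theta01 f_le]]]] : exists w theta, 0 < w /\ 0 < theta < 1 /\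
    forall n k, f n k <= w ^+ k * theta ^+ n.
  apply: (renewal_geometric_bound (c := c * K) (rho := rho)) => //.
  - exact: mulr_ge0.
  - by move=> n k; case/andP: (f01 n k).
  - by case/andP: (f01 0%N 0%N).
  - by move=> n; rewrite /f return_set_S0 // measure0.
  move=> n k; apply: le_trans (f_rec n k) _; apply: ler_sum => t _.
  rewrite -mulrA -[X in _ <= X]mulrA -mulrA; apply: ler_wpM2l => //.
  by rewrite mulrA ler_wpM2r ?fine_measure_ge0.
have [C [theta' [C0 [theta'01 sum_le]]]] :=
  weighted_geometric_sum_bound w0 theta01 tau01 f01 f_le.
exists C, theta'; do 2![split=> //] => n.
by rewrite (integral_pow_Psi tower) ?lee_fin ?sum_le //; case/andP: tau01.
Qed.
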